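(* Let $X$ be a finite uniconnected cycle set whose permutation group $\mathcal{G}(X)$ is a Dedekind group (every subgroup is normal). Then $X$ has finite multipermutation level.
   Context: A (non-degenerate) cycle set is a set $X$ with an operation such that each $\sigma_x:y\mapsto x\cdot y$ is bijective, $(x\cdot y)\cdot(x\cdot z)=(y\cdot x)\cdot(y\cdot z)$, and $x\mapsto x\cdot x$ is bijective. $\mathcal{G}(X)$ is the permutation group generated by $\{\sigma_x\mid x\in X\}$; $X$ is uniconnected if $\mathcal{G}(X)$ acts regularly on $X$. $\mathrm{Ret}(X)$ is the quotient of $X$ by $x\sim y\iff\sigma_x=\sigma_y$; $\mathrm{Ret}^0(X)=X$, $\mathrm{Ret}^i(X)=\mathrm{Ret}(\mathrm{Ret}^{i-1}(X))$; $X$ has finite multipermutation level if $|\mathrm{Ret}^n(X)|=1$ for some $n$. *)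

From HB Require Import structures.
From mathcomp Require Import all_boot all_order all_fingroup.
Set Implicit Arguments. Unset Strict Implicit. Unset Printing Implicit Defensive.

Record magma := Magma { carrier :> finType; mop : carrier -> carrier -> carrier }.

Definition sigmaf (M : magma) (x : M) : {ffun M -> M} := [ffun y => mop x y].

(* Ret(M): the set {sigma_x | x in M}, i.e. M modulo x ~ y <-> sigma_x = sigma_y *)
Definition RetT (M : magma) : finType := {f : {ffun M -> M} | f \in codom (@sigmaf M)}.

Definition ret_rep (M : magma) (a : RetT M) : M := iinv (valP a).

(* induced operation [x].[y] = [x.y]  (well defined for cycle sets) *)
Definition ret_op (M : magma) (a b : RetT M) : RetT M :=
  exist _ (sigmaf (mop (ret_rep a) (ret_rep b))) (codom_f _ _).

Definition Ret (M : magma) : magma := @Magma (RetT M) (@ret_op M).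

Fixpoint Ret_iter (n : nat) (M : magma) : magma :=
  match n with 0 => M | n'.+1 => Ret (Ret_iter n' M) end.

Definition is_cycle_set (X : finType) (op : X -> X -> X) : Prop :=
  [/\ forall x, bijective (op x),
      forall x y z, op (op x y) (op x z) = op (op y x) (op y z)
    & bijective (fun x => op x x)].

Definition sigma_set (X : finType) (op : X -> X -> X) : {set {perm X}} :=
  [set p : {perm X} | [exists x, [forall y, p y == op x y]]].

Definition permG (X : finType) (op : X -> X -> X) : {group {perm X}} :=
  <<sigma_set op>>%G.

(* G acts regularly on X: transitively with trivial point stabilisers *)
Definition uniconnected (X : finType) (op : X -> X -> X) : Prop :=
  [transitive permG op, on [set: X] | 'P] /\
  forall x : X, ('C_(permG op)[x | 'P])%g = 1%g.

Definition dedekind (gT : finGroupType) (G : {group gT}) : Prop :=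
  forall H : {group gT}, (H \subset G)%g -> (H <| G)%g.

Definition finite_mp_level (X : finType) (op : X -> X -> X) : Prop :=
  exists n, #|Ret_iter n (Magma op)| = 1%N.

From Pilot Require Import Defs.
From mathcomp Require Import all_boot all_order all_fingroup.
Set Implicit Arguments. Unset Strict Implicit. Unset Printing Implicit Defensive.
Local Open Scope group_scope.

(* A transitive Dedekind permutation group G is regular: a point stabiliser is
   normal, hence contained in the kernel of the action, so |G| = |X|.
   Retraction induces a homomorphism from G(X) onto G(Ret X), so Ret X is again
   a transitive cycle set with Dedekind permutation group.  If |Ret X| = |X|,
   the |X| distinct sigma_x exhaust G(X), so some sigma_a is the identity; the
   cycle set law then gives sigma_(y.a) = sigma_a, i.e. y.a = a for all y, so
   G(X) fixes a and is trivial, whence |X| = 1.  Thus retraction strictly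
   shrinks X until a single point is left. *)

Lemma dedekind_morphim (aT rT : finGroupType) (G : {group aT})
    (f : {morphism G >-> rT}) :
  dedekind G -> dedekind (f @* G).
Proof.
move=> dG H sHfG; rewrite -(morphpreK sHfG).
exact/morphim_normal/dG/subsetIl.
Qed.

Lemma dedekind_astab1_trivg (T : finType) (G : {group {perm T}}) (x : T) :
  dedekind G -> [transitive G, on [set: T] | 'P] -> 'C_G[x | 'P] = 1.
Proof.
move=> dG trG; apply/trivgP; apply: subset_trans (perm_faithful G).
rewrite subsetI subsetIl (astab_trans_gcore trG (in_setT x)).
rewrite gcore_max ?subsetIr //.
exact/normal_norm/dG/subsetIl.
Qed.

Lemma card_dedekind_transitive (T : finType) (G : {group {perm T}}) :
  dedekind G -> [transitive G, on [set: T] | 'P] -> #|G| = #|T|.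
Proof.
move=> dG trG; have [x _ _] := imsetP trG.
rewrite -(card_orbit_stab 'P G x) (atransP trG _ (in_setT x)).
by rewrite dedekind_astab1_trivg // cards1 muln1 cardsT.
Qed.

Lemma sigma_setP (X : finType) (op : X -> X -> X) (p : {perm X}) :
  reflect (exists x, forall y, p y = op x y) (p \in sigma_set op).
Proof.
rewrite inE; apply: (iffP existsP) => -[x px]; exists x.
  by move=> y; apply/eqP/(forallP px).
by apply/forallP => y; rewrite px.
Qed.

Definition ret_class (M : magma) (x : M) : RetT M :=
  exist _ (sigmaf x) (codom_f _ x).

Lemma ret_classK (M : magma) : cancel (@ret_rep M) (@ret_class M).
Proof. by move=> a; apply: val_inj; apply: f_iinv. Qed.

Lemma ret_class_eqP (M : magma) (x y : M) :
  ret_class x = ret_class y <-> mop x =1 mop y.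
Proof.
split=> [/(congr1 val) /= + z | E].
  by move/ffunP/(_ z); rewrite !ffunE.
by apply: val_inj; apply/ffunP => z; rewrite !ffunE.
Qed.

Lemma ret_opE (M : magma) (a b : RetT M) :
  ret_op a b = ret_class (mop (ret_rep a) (ret_rep b)).
Proof. by []. Qed.

Lemma card_Ret_leq (M : magma) : #|Ret M| <= #|M|.
Proof. by rewrite card_sig; apply: leq_image_card. Qed.

Lemma card_Ret_eq_inj (M : magma) : #|Ret M| = #|M| -> injective (@ret_class M).
Proof.
rewrite card_sig => /eqP/image_injP inj_sigmaf x y /(congr1 val).
exact: inj_sigmaf.
Qed.

Lemma Ret_iterS (n : nat) (M : magma) : Ret_iter n.+1 M = Ret_iter n (Ret M).
Proof. by elim: n => //= n ->. Qed.

Section CycleSet.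

Variable M : magma.
Local Notation op := (@mop M).
Hypothesis csM : is_cycle_set op.

Lemma op_inj (x : M) : injective (op x).
Proof. by case: csM => bij _ _; exact: bij_inj (bij x). Qed.

Definition sigma_perm (x : M) : {perm M} := perm (@op_inj x).

Lemma sigma_permE (x y : M) : sigma_perm x y = op x y.
Proof. exact: permE. Qed.

Lemma sigma_perm_in (x : M) : sigma_perm x \in permG op.
Proof. by apply/mem_gen/sigma_setP; exists x; apply: sigma_permE. Qed.

Lemma sigma_respects_ret (x : M) :
  {homo op x : u v / ret_class u = ret_class v}.
Proof.
case: csM => bij cyc _ u v /ret_class_eqP Euv; apply/ret_class_eqP => w.
have [g _ gK] := bij x.
by rewrite -(gK w) cyc !Euv -cyc.
Qed.

Lemma permG_respects_ret (p : {perm M}) : p \in permG op ->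
  {homo p : u v / ret_class u = ret_class v}.
Proof.
pose R := [set q : {perm M} | [forall u, forall v,
  (ret_class u == ret_class v) ==> (ret_class (q u) == ret_class (q v))]].
have RP (q : {perm M}) :
    reflect {homo q : u v / ret_class u = ret_class v} (q \in R).
  rewrite inE; apply: (iffP forallP) => [qR u v /eqP Euv | qR u].
    exact/eqP/(implyP (forallP (qR u) v)).
  by apply/forallP => v; apply/implyP => /eqP/qR ->.
have gR : group_set R.
  apply/group_setP; split; first by apply/RP => u v; rewrite !perm1.
  by move=> q r /RP qR /RP rR; apply/RP => u v Euv; rewrite !permM; apply/rR/qR.
have: permG op \subset Group gR.
  rewrite gen_subG; apply/subsetP => q /sigma_setP[x qx]; apply/RP => u v.
  by rewrite !qx; apply: sigma_respects_ret.
by move/subsetP => sGR /sGR/RP.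
Qed.

Lemma permG_reflects_ret (p : {perm M}) (u v : M) : p \in permG op ->
  ret_class (p u) = ret_class (p v) -> ret_class u = ret_class v.
Proof.
by move=> pG /(permG_respects_ret (groupVr pG)); rewrite !permK.
Qed.

Lemma ret_class_op (x y : M) :
  ret_op (ret_class x) (ret_class y) = ret_class (op x y).
Proof.
rewrite ret_opE; have /ret_class_eqP -> := ret_classK (ret_class x).
exact/sigma_respects_ret/ret_classK.
Qed.

Lemma Ret_cycle_set : is_cycle_set (@ret_op M).
Proof.
case: (csM) => _ cyc [diag_inv _ diag_invK]; split.
- move=> a; apply: injF_bij => b c.
  rewrite -[a]ret_classK -[b]ret_classK -[c]ret_classK !ret_class_op.
  by rewrite -!sigma_permE => /permG_reflects_ret; apply; apply: sigma_perm_in.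
- move=> a b c.
  by rewrite -[a]ret_classK -[b]ret_classK -[c]ret_classK !ret_class_op cyc.
- pose inv a := ret_class (diag_inv (ret_rep a)).
  have invK : cancel inv (fun a => ret_op a a).
    by move=> a; rewrite /inv ret_class_op diag_invK ret_classK.
  by exists inv => //; apply: canF_sym.
Qed.

(* Extended by the identity outside permG so that ret_perm is a permutation. *)
Definition ret_perm_fun (p : {perm M}) (a : RetT M) : RetT M :=
  if p \in permG op then ret_class (p (ret_rep a)) else a.

Lemma ret_perm_fun_inj (p : {perm M}) : injective (ret_perm_fun p).
Proof.
move=> a b; rewrite /ret_perm_fun; case: ifP => // pG.
by move/(permG_reflects_ret pG); rewrite !ret_classK.
Qed.

Definition ret_perm (p : {perm M}) : {perm RetT M} :=
  perm (@ret_perm_fun_inj p).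

Lemma ret_permE (p : {perm M}) (x : M) : p \in permG op ->
  ret_perm p (ret_class x) = ret_class (p x).
Proof.
move=> pG; rewrite permE /ret_perm_fun pG.
exact/(permG_respects_ret pG)/ret_classK.
Qed.

Lemma ret_perm_morphM : {in permG op &, {morph ret_perm : p q / p * q}}.
Proof.
move=> p q pG qG; apply/permP => a.
by rewrite -[a]ret_classK permM !ret_permE ?groupM // permM.
Qed.

Canonical ret_morphism := Morphism ret_perm_morphM.

Lemma morphim_ret_perm : ret_morphism @* permG op = permG (@ret_op M).
Proof.
rewrite morphim_gen ?subset_gen // morphimEsub ?subset_gen //; congr <<_>>.
apply/setP => p; apply/imsetP/sigma_setP => [[q qA ->] | [a pa]].
  have /sigma_setP[x qx] := qA.
  exists (ret_class x) => b; rewrite -[b]ret_classK ret_permE ?mem_gen //.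
  by rewrite ret_class_op qx.
exists (sigma_perm (ret_rep a)).
  by apply/sigma_setP; exists (ret_rep a); apply: sigma_permE.
apply/permP => b; rewrite pa ret_opE.
by rewrite /= permE /ret_perm_fun sigma_perm_in sigma_permE.
Qed.

Lemma dedekind_Ret : dedekind (permG op) -> dedekind (permG (@ret_op M)).
Proof. by move=> dG H; rewrite -morphim_ret_perm; apply: dedekind_morphim. Qed.

Lemma transitive_Ret : [transitive permG op, on [set: M] | 'P] ->
  [transitive permG (@ret_op M), on [set: RetT M] | 'P].
Proof.
move=> trG; have [x _ _] := imsetP trG.
apply/imsetP; exists (ret_class x) => //; apply/eqP.
rewrite eqEsubset subsetT andbT; apply/subsetP => a _.
rewrite -[a]ret_classK.
have [p pG ->] := atransP2 trG (in_setT x) (in_setT (ret_rep a)).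
rewrite /= -ret_permE //; apply: mem_orbit.
by rewrite -morphim_ret_perm mem_morphim.
Qed.

Lemma sigma_perm_eq1_fixed (a : M) : injective (@ret_class M) ->
  sigma_perm a = 1 -> forall y, op y a = a.
Proof.
case: csM => bij cyc _ inj_cls a1 y; apply: inj_cls; apply/ret_class_eqP => w.
have a1z z : op a z = z by rewrite -sigma_permE a1 perm1.
have [g _ gK] := bij y.
by rewrite -(gK w) cyc !a1z.
Qed.

Lemma permG_sub_astab1 (a : M) :
  (forall y, op y a = a) -> permG op \subset 'C[a | 'P].
Proof.
move=> fix_a; rewrite gen_subG; apply/subsetP => p /sigma_setP[x px].
by apply/astab1P; rewrite /= apermE px.
Qed.

Section DedekindTransitive.

Hypotheses (dG : dedekind (permG op))
           (trG : [transitive permG op, on [set: M] | 'P]).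

Lemma sigma_perm_eq1 : injective (@ret_class M) -> exists a, sigma_perm a = 1.
Proof.
move=> inj_cls.
have inj_sigma : injective sigma_perm.
  move=> x y /permP Exy; apply: inj_cls; apply/ret_class_eqP => z.
  by have := Exy z; rewrite !sigma_permE.
have sigmaG : [set sigma_perm x | x : M] = permG op.
  apply/eqP; rewrite eqEcard card_imset // card_dedekind_transitive //.
  rewrite leqnn andbT.
  by apply/subsetP => _ /imsetP[x _ ->]; apply: sigma_perm_in.
have /imsetP[a _ a1] : 1 \in [set sigma_perm x | x : M] by rewrite sigmaG.
by exists a.
Qed.

Lemma card_Ret_lt : 1 < #|M| -> #|Ret M| < #|M|.
Proof.
move=> gt1_M; rewrite ltn_neqAle card_Ret_leq andbT.
apply/eqP => /card_Ret_eq_inj inj_cls.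
have [a a1] := sigma_perm_eq1 inj_cls.
have G1 : permG op = 1 :> {set _}.
  rewrite -(dedekind_astab1_trivg a dG trG); apply/esym/setIidPl.
  exact/permG_sub_astab1/sigma_perm_eq1_fixed.
by move: gt1_M; rewrite -(card_dedekind_transitive dG trG) G1 cards1.
Qed.

End DedekindTransitive.
End CycleSet.

Lemma Ret_iter_card1 (M : magma) : is_cycle_set (@mop M) ->
  dedekind (permG (@mop M)) -> [transitive permG (@mop M), on [set: M] | 'P] ->
  exists n, #|Ret_iter n M| = 1%N.
Proof.
have [m] := ubnP #|M|; elim: m M => // m IH M ltMm csM dG trG.
have [gt1_M | le1_M] := ltnP 1 #|M|.
  have ltRm : #|Ret M| < m by apply: leq_trans (card_Ret_lt csM dG trG gt1_M) _.
  have [n Hn] := IH _ ltRm (Ret_cycle_set csM) (dedekind_Ret csM dG)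
    (transitive_Ret csM trG).
  by exists n.+1; rewrite Ret_iterS.
exists 0; apply/eqP; rewrite eqn_leq le1_M; have [x _ _] := imsetP trG.
by apply/card_gt0P; exists x.
Qed.

Theorem mainTheorem7 (X : finType) (op : X -> X -> X) :
  is_cycle_set op -> uniconnected op -> dedekind (permG op) ->
  finite_mp_level op.
Proof.
by move=> csX [trG _] dG; apply: (@Ret_iter_card1 (Defs.Magma op)).
Qed.
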